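(* Let $p,q\ge0$, $n=p+q\ge1$, $N=2^{\lfloor (n+1)/2\rfloor}$. For every $M\in\mathcal{G}^{\mathbb{C}}_{p,q}$: $C_{(N)}(M^\dagger M)=0$ if and only if $C_{(N)}(M)=0$; and $C_{(1)}(M^\dagger M)=0$ if and only if $M=0$.
   Context: Let $\mathcal{G}_{p,q}$ be the real Clifford algebra with identity $e$ and generators $e_1,\dots,e_n$ satisfying $e_ae_b+e_be_a=2\eta_{ab}e$, $\eta={\rm diag}(1,\dots,1,-1,\dots,-1)$ ($p$ ones, $q$ minus ones), basis elements $e_A=e_{a_1}\cdots e_{a_k}$ for $a_1<\dots<a_k$, and $\mathcal{G}^{\mathbb{C}}_{p,q}=\mathbb{C}\otimes\mathcal{G}_{p,q}$ with elements $M=\sum_A m_Ae_A$, $m_A\in\mathbb{C}$. Hermitian conjugation: $M^\dagger=\sum_A\overline{m_A}(e_A)^{-1}$. Let $\langle M\rangle_0$ denote the coefficient of $e$ (scalar part). Let $\beta$ be an algebra isomorphism from $\mathcal{G}^{\mathbb{C}}_{p,q}$ onto ${\rm Mat}(N,\mathbb{C})$ if $n$ is even, and onto block-diagonal matrices ${\rm diag}(X,Y)$, $X,Y\in{\rm Mat}(N/2,\mathbb{C})$, if $n$ is odd. The characteristic polynomial coefficients $C_{(k)}(M)$, $k=1,\dots,N$, are defined by $\det(\lambda I_N-\beta(M))=\lambda^N-C_{(1)}(M)\lambda^{N-1}-\cdots-C_{(N)}(M)$ (independent of $\beta$); equivalently they are given by the recursion $M_{(1)}=M$, $C_{(k)}=\frac{N}{k}\langle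 M_{(k)}\rangle_0$, $M_{(k+1)}=M(M_{(k)}-C_{(k)})$. *)

From HB Require Import structures.
From mathcomp Require Import all_boot all_algebra.
From mathcomp Require Import reals complex.
Set Implicit Arguments. Unset Strict Implicit. Unset Printing Implicit Defensive.
Import GRing.Theory Num.Theory.
Local Open Scope ring_scope.

Section Clifford.
Variables (R : realType) (p q : nat).
Local Notation n := (p + q)%N.
Local Notation C := R[i].

(* An element M = sum_A m_A e_A of G^C_{p,q}: the coefficient family
   A |-> m_A, indexed by subsets A of the generator set {e_0..e_(n-1)}
   (a subset A = {a_1 < ... < a_k} stands for e_A = e_{a_1}...e_{a_k}). *)
Definition cl := {ffun {set 'I_n} -> C}.

Definition cl_eta (a : 'I_n) : C := if (a < p)%N then 1 else -1.

(* e_A e_B = (-1)^{#{(a,b) in A x B | b < a}} (prod_{c in A cap B} eta_cc) e_{A Δ B} *)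
Definition cl_sign (A B : {set 'I_n}) : C :=
  (-1) ^+ #|[set ab : 'I_n * 'I_n | (ab.1 \in A) && (ab.2 \in B) && (ab.2 < ab.1)%N]|
  * \prod_(c in A :&: B) cl_eta c.

Definition cl_symdiff (A B : {set 'I_n}) : {set 'I_n} := (A :\: B) :|: (B :\: A).

Definition cl_mul (M N : cl) : cl :=
  [ffun D => \sum_(A : {set 'I_n}) \sum_(B : {set 'I_n})
      (if cl_symdiff A B == D then cl_sign A B * M A * N B else 0)].

Definition cl_basis (A : {set 'I_n}) : cl := [ffun B => (B == A)%:R].
Definition cl_one : cl := cl_basis set0.
Definition cl_gen (a : 'I_n) : cl := cl_basis [set a].

Definition cl_scalar (M : cl) : C := M set0.

(* (e_A)^{-1} = e_{a_k}^{-1} ... e_{a_1}^{-1}, with e_a^{-1} = eta_aa e_a *)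
Definition cl_basis_inv (A : {set 'I_n}) : cl :=
  foldr cl_mul cl_one [seq cl_eta a *: cl_gen a | a <- rev (enum A)].

Definition cl_dagger (M : cl) : cl :=
  \sum_(A : {set 'I_n}) (M A)^* *: cl_basis_inv A.

Definition cl_N : nat := 2 ^ (n.+1)./2.

(* Recursion: M_(1) = M, C_(k) = N/k <M_(k)>_0, M_(k+1) = M (M_(k) - C_(k)).
   cl_Mk M k = M_(k+1). *)
Fixpoint cl_Mk (M : cl) (k : nat) : cl :=
  match k with
  | 0 => M
  | k'.+1 => let Mk := cl_Mk M k' in
             let ck := (cl_N%:R / (k'.+1)%:R) * cl_scalar Mk in
             cl_mul M (Mk - ck *: cl_one)
  end.

Definition cl_C (M : cl) (k : nat) : C :=
  (cl_N%:R / k%:R) * cl_scalar (cl_Mk M k.-1).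

End Clifford.

(* Everything is transported to an explicit matrix representation.  Iterated
   tensor products of Pauli matrices give 2m pairwise anticommuting hermitian
   involutions gamma_0, ..., gamma_(2m-1) of size N = 2^m, m = ceil(n/2).
   Multiplying the last q of them by i gives generators squaring to eta_aa, and
   sending e_A to the ordered product of the generators in A is an algebra
   morphism cl_mx from G^C_{p,q} to N x N complex matrices, mapping M^dagger to
   the conjugate transpose of cl_mx M.  Each e_A with A nonempty anticommutes
   with some gamma_b, so it is traceless and tr (cl_mx M) = N <M>_0.  Hence the
   recursion defining the C_(k) is the Faddeev-LeVerrier recursion for cl_mx M
   (proved from ('X - A) adj('X - A) = char_poly A and Jacobi's formula for the
   derivative of char_poly A), so C_(N)(M) = -(-1)^N det (cl_mx M) and
   C_(N)(M^dagger M) = -(-1)^N |C_(N)(M)|^2.  Finally the e_A are orthonormal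
   for the trace form, so C_(1)(M^dagger M) = N sum_A |m_A|^2. *)

From HB Require Import structures.
From mathcomp Require Import all_boot all_algebra.
From mathcomp Require Import reals complex zify.
Import GRing.Theory Num.Theory.
Local Open Scope ring_scope.
Set Implicit Arguments. Unset Strict Implicit. Unset Printing Implicit Defensive.

Section CharPolyDerivative.
Variable R : comNzRingType.

Lemma deriv_prod (I : eqType) (r : seq I) (f : I -> {poly R}) : uniq r ->
  (\prod_(i <- r) f i)^`() =
  \sum_(j <- r) \prod_(i <- r) (if i == j then (f i)^`() else f i).
Proof.
elim: r => [|a r IHr] /=; first by rewrite !big_nil derivC.
case/andP=> a_notin_r uniq_r; rewrite !big_cons derivM IHr // eqxx mulr_sumr.
congr (_ * _ + _).
- by apply: eq_big_seq => i ir; case: eqP => // ia; rewrite -ia ir in a_notin_r.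
- apply: eq_big_seq => j jr; rewrite big_cons.
  by case: eqP => // aj; rewrite aj jr in a_notin_r.
Qed.

Lemma deriv_det n (P : 'M[{poly R}]_n) :
  (\det P)^`() =
  \sum_(j < n) \det (\matrix_(i, k) if i == j then (P i k)^`() else P i k).
Proof.
rewrite /determinant linear_sum exchange_big /=; apply: eq_bigr => s _.
have sign_const : ((-1) ^+ perm.odd_perm s : {poly R})^`() = 0.
  by case: (perm.odd_perm s); rewrite ?expr1 ?expr0 ?derivN derivC ?oppr0.
rewrite derivM sign_const mul0r add0r deriv_prod ?index_enum_uniq // mulr_sumr.
by apply: eq_bigr => j _; congr (_ * _); apply: eq_bigr => i _; rewrite mxE; case: eqP.
Qed.

Lemma deriv_char_poly n (A : 'M[R]_n) :
  (char_poly A)^`() = \tr (\adj (char_poly_mx A)).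
Proof.
rewrite /char_poly deriv_det /mxtrace; apply: eq_bigr => j _.
rewrite (expand_det_row _ j) (bigD1 j) //= big1 ?addr0 => [|k kj]; rewrite !mxE eqxx.
  rewrite derivB derivMn derivX derivC subr0 mulr1n mul1r /cofactor.
  congr (_ * \det _); apply/matrixP => i k; rewrite !mxE.
  by rewrite eq_sym (negbTE (neq_lift _ _)).
by rewrite derivB derivMn derivX derivC subr0 eq_sym (negbTE kj) mulr0n mul0r.
Qed.

End CharPolyDerivative.

Section FaddeevLeVerrier.
Variables (F : fieldType) (n : nat) (A : 'M[F]_n).
Hypothesis F_pchar0 : [pchar F] =i pred0.

Fixpoint faddeev_leverrier (k : nat) : 'M[F]_n :=
  if k is k'.+1 then
    let B := faddeev_leverrier k' in A *m (B - (\tr B / k%:R) *: 1%:M)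
  else A.

Local Notation chi := (char_poly A).

Let adj_coef (j : nat) : 'M[F]_n :=
  \matrix_(i, l) ((\adj (char_poly_mx A)) i l)`_j.

Lemma adj_coef_rec j :
  (if j is j'.+1 then adj_coef j' else 0) - A *m adj_coef j = chi`_j *: 1%:M.
Proof.
apply/matrixP => i l.
have := congr1 (fun M : 'M[{poly F}]_n => (M i l)`_j) (mul_mx_adj (char_poly_mx A)).
rewrite /= !mxE coef_sum mulr_natr -coefMn => <-; apply/esym.
under eq_bigr => k _ do
  rewrite !mxE mulrBl coefB mulrnAl coefMn coefXM coefCM.
rewrite sumrB (bigD1 i) //= eqxx mulr1n big1 ?addr0; last first.
  by move=> k; rewrite eq_sym => /negbTE ->.
rewrite /adj_coef; congr (_ - _); first by case: j => [|j] /=; rewrite !mxE.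
by apply: eq_bigr => k _; rewrite !mxE.
Qed.

Lemma tr_adj_coef j : \tr (adj_coef j) = chi`_j.+1 *+ j.+1.
Proof.
rewrite -coef_deriv deriv_char_poly /mxtrace coef_sum.
by apply: eq_bigr => i _; rewrite mxE.
Qed.

Lemma adj_coef_ge j : (n <= j)%N -> adj_coef j = 0.
Proof.
pose d := (\max_(il : 'I_n * 'I_n) size ((\adj (char_poly_mx A)) il.1 il.2))%N.
have adj_coef_large i : (d <= i)%N -> adj_coef i = 0.
  move=> le_d_i; apply/matrixP => k l; rewrite mxE [RHS]mxE nth_default //.
  exact: leq_trans (leq_bigmax (k, l)) le_d_i.
have adj_coef_shift i : (n <= i)%N -> adj_coef i = A *m adj_coef i.+1.
  move=> le_n_i; apply/eqP; rewrite -subr_eq0 (adj_coef_rec i.+1).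
  by rewrite nth_default ?size_char_poly // scale0r.
suff vanish t i : (n <= i)%N -> (d <= i + t)%N -> adj_coef i = 0.
  by move=> le_n_j; apply: (vanish d) => //; rewrite leq_addl.
elim: t i => [|t IHt] i le_n_i; first by rewrite addn0; apply: adj_coef_large.
by rewrite addnS -addSn => le_d; rewrite adj_coef_shift // (IHt i.+1) ?mulmx0 // ltnW.
Qed.

Lemma adj_coef_top : (0 < n)%N -> adj_coef n.-1 = 1%:M.
Proof.
move=> n_gt0; have /= := adj_coef_rec n.-1.+1.
rewrite prednK // (adj_coef_ge (leqnn n)) mulmx0 subr0 => ->.
have /monicP := char_poly_monic A.
by rewrite lead_coefE size_char_poly => ->; rewrite scale1r.
Qed.

Lemma tr_mul_adj_coef j : (j < n)%N -> \tr (A *m adj_coef j) = - (chi`_j *+ (n - j)).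
Proof.
move=> lt_j_n; have /(congr1 (@mxtrace _ _)) := adj_coef_rec j.
rewrite raddfB /= mxtraceZ mxtrace1 mulr_natr => /eqP.
rewrite subr_eq addrC -subr_eq => /eqP <-.
rewrite mulrnBr ?(ltnW lt_j_n) // opprB; congr (_ - _).
by case: j lt_j_n => [|j] _ /=; rewrite ?mxtrace0 ?tr_adj_coef.
Qed.

Lemma tr_mul_adj_coef_div k : (k < n)%N ->
  \tr (A *m adj_coef (n - k.+1)) / k.+1%:R = - chi`_(n - k.+1).
Proof.
move=> lt_k_n; rewrite tr_mul_adj_coef ?subnSK ?leq_subr // subKn //.
by rewrite -[_ *+ k.+1]mulr_natr mulNr mulfK //; move/pcharf0P: F_pchar0 => ->.
Qed.

Lemma faddeev_leverrierE k : (k < n)%N ->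
  faddeev_leverrier k = A *m adj_coef (n - k.+1).
Proof.
elim: k => [|k IHk] lt_k1_n /=.
  by rewrite subn1 adj_coef_top ?mulmx1 // (leq_ltn_trans _ lt_k1_n).
have lt_k_n := ltnW lt_k1_n.
rewrite IHk // tr_mul_adj_coef_div // scaleNr opprK.
have -> : (n - k.+1 = (n - k.+2).+1)%N by rewrite subnSK.
by have /= /eqP := adj_coef_rec (n - k.+2).+1; rewrite subr_eq addrC => /eqP <-.
Qed.

Lemma tr_faddeev_leverrier k : (k < n)%N ->
  \tr (faddeev_leverrier k) / k.+1%:R = - chi`_(n - k.+1).
Proof. by move=> lt_k_n; rewrite faddeev_leverrierE // tr_mul_adj_coef_div. Qed.

Lemma faddeev_leverrier_det : (0 < n)%N ->
  \tr (faddeev_leverrier n.-1) / n%:R = - ((-1) ^+ n * \det A).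
Proof.
move=> n_gt0; have := tr_faddeev_leverrier (k := n.-1).
by rewrite prednK // subnn char_poly_det; apply.
Qed.

End FaddeevLeVerrier.

Lemma big_nat_recr_cond (T : Type) (idx : T) (op : Monoid.law idx) k
    (P : pred nat) (F : nat -> T) :
  \big[op/idx]_(0 <= i < k.+1 | P i) F i =
  op (\big[op/idx]_(0 <= i < k | P i) F i) (if P k then F k else idx).
Proof. by rewrite /index_iota !subn0 -addn1 iotaD cats1 big_rcons. Qed.

Definition inversions (k : nat) (S T : pred nat) : nat :=
  \sum_(0 <= i < k | S i) count T (iota 0 i).

Lemma leq_double_uphalf k : (k <= 2 * uphalf k)%N.
Proof. by rewrite mul2n -leq_uphalf_double. Qed.

Lemma count_iota_predD1 (S : pred nat) b k :
  (count (fun j => S j && (j != b)) (iota 0 k) + (S b && (b < k)))%N =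
  count S (iota 0 k).
Proof.
have uniq_t : uniq (filter S (iota 0 k)) by rewrite filter_uniq ?iota_uniq.
have -> : nat_of_bool (S b && (b < k))%N = count_mem b (filter S (iota 0 k)).
  by rewrite count_uniq_mem // mem_filter mem_iota.
have -> : count (fun j => S j && (j != b)) (iota 0 k) =
          count (predC1 b) (filter S (iota 0 k)).
  by rewrite count_filter; apply: eq_count => j /=; rewrite andbC.
by rewrite -[count S _]size_filter -(count_predC (pred1 b)) addnC.
Qed.

Lemma exists_odd_count_predD1 (S : pred nat) k m :
  (k <= 2 * m)%N -> has S (iota 0 k) ->
  exists2 b, (b < 2 * m)%N & odd (count (fun j => S j && (j != b)) (iota 0 k)).
Proof.
move=> le_k_2m hasS; have [odd_c | even_c] := boolP (odd (count S (iota 0 k))).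
  suff [b lt_b notSb] : exists2 b, (b < 2 * m)%N & ~~ (S b && (b < k))%N.
    by exists b; rewrite // -(count_iota_predD1 S b) (negbTE notSb) addn0 in odd_c.
  have [lt_k_2m | ge_k_2m] := ltnP k (2 * m); first by exists k; rewrite ?ltnn ?andbF.
  have : has (predC S) (iota 0 k).
    rewrite has_count -(ltn_add2l (count S (iota 0 k))) addn0 count_predC size_iota.
    rewrite ltn_neqAle -[X in (_ <= X)%N](size_iota 0 k) count_size andbT.
    apply: contraTneq odd_c => ->.
    suff -> : k = (2 * m)%N by rewrite oddM.
    by apply/eqP; rewrite eqn_leq le_k_2m.
  case/hasP => b; rewrite mem_iota => /andP[_ lt_b_k] notSb.
  by exists b; [apply: leq_trans le_k_2m | rewrite (negbTE notSb)].
case/hasP: hasS => b; rewrite mem_iota => /andP[_ lt_b_k] Sb.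
exists b; first exact: leq_trans lt_b_k le_k_2m.
by rewrite -(count_iota_predD1 S b) Sb lt_b_k addn1 /= negbK in even_c.
Qed.

Section GeneratorMonomials.
Variables (K : comNzRingType) (A : algType K).

Definition gen_monomial (g : nat -> A) (k : nat) (S : pred nat) : A :=
  \prod_(0 <= i < k | S i) g i.

Lemma gen_monomial0 g (S : pred nat) : gen_monomial g 0 S = 1.
Proof. by rewrite /gen_monomial big_geq. Qed.

Lemma gen_monomialS g k (S : pred nat) :
  gen_monomial g k.+1 S = gen_monomial g k S * (if S k then g k else 1).
Proof. exact: big_nat_recr_cond. Qed.

Lemma eq_gen_monomial g k (S T : pred nat) :
  (forall i, (i < k)%N -> S i = T i) -> gen_monomial g k S = gen_monomial g k T.
Proof.
move=> eqST; rewrite /gen_monomial big_mkcond [RHS]big_mkcond.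
by apply: eq_big_nat => i /andP[_ /eqST ->].
Qed.

Lemma commr_gen_monomial (x : A) g (s : nat -> K) k (S : pred nat) :
    (forall j, (j < k)%N -> S j -> x * g j = s j *: (g j * x)) ->
  x * gen_monomial g k S = (\prod_(0 <= j < k | S j) s j) *: (gen_monomial g k S * x).
Proof.
elim: k => [|k IHk] xg; first by rewrite gen_monomial0 big_geq // scale1r mul1r mulr1.
rewrite gen_monomialS big_nat_recr_cond mulrA IHk => [|j /ltnW]; last exact: xg.
rewrite -scalerAl -scalerA; case: ifP => Sk; last by rewrite scale1r !mulr1.
by rewrite -[_ * x * _]mulrA xg // -scalerAr !mulrA.
Qed.

Lemma anticommr_gen_monomial (x : A) g k (S : pred nat) :
    (forall j, (j < k)%N -> S j -> x * g j = - (g j * x)) ->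
  x * gen_monomial g k S = (-1) ^+ count S (iota 0 k) *: (gen_monomial g k S * x).
Proof.
move=> xg; rewrite (@commr_gen_monomial x g (fun=> -1)) => [|j lt_jk Sj]; last first.
  by rewrite scaleN1r xg.
by rewrite big_const_seq iter_mulr_1 /index_iota subn0.
Qed.

Variables (g : nat -> A) (eta : nat -> K) (L : nat).
Hypothesis g_sqr : forall i, (i < L)%N -> g i * g i = (eta i)%:A.
Hypothesis g_anticomm :
  forall i j, (i < L)%N -> (j < L)%N -> i != j -> g i * g j = - (g j * g i).

Lemma gen_monomial_mul k (S T : pred nat) : (k <= L)%N ->
  gen_monomial g k S * gen_monomial g k T =
  ((-1) ^+ inversions k S T * \prod_(0 <= i < k | S i && T i) eta i)
    *: gen_monomial g k [pred i | S i (+) T i].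
Proof.
elim: k => [|k IHk] le_kL.
  by rewrite !gen_monomial0 /inversions !big_geq // expr0 !mulr1 scale1r.
rewrite !gen_monomialS.
set gS := if S k then g k else 1; set gT := if T k then g k else 1.
have gS_monoT : gS * gen_monomial g k T =
    (-1) ^+ (if S k then count T (iota 0 k) else 0) *: (gen_monomial g k T * gS).
  rewrite /gS; case: (S k); last by rewrite scale1r mulr1 mul1r.
  apply: anticommr_gen_monomial => j lt_jk _.
  by rewrite g_anticomm ?(ltn_trans lt_jk) // gtn_eqF.
have gS_gT : gS * gT = (if S k && T k then eta k else 1) *: (if S k (+) T k then g k else 1).
  rewrite /gS /gT; case: (S k); case: (T k); rewrite /= ?mul1r ?mulr1 ?scale1r //.
  by rewrite g_sqr // -[in LHS]scalerAl mul1r scale1r.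
rewrite mulrA -(mulrA (gen_monomial g k S)) gS_monoT -scalerAr -scalerAl.
rewrite mulrA (IHk (ltnW le_kL)) -!scalerAl -mulrA gS_gT -scalerAr !scalerA.
rewrite /inversions !big_nat_recr_cond exprD; congr (_ *: (_ * _)).
by rewrite /= !mulrA; congr (_ * _ * _); apply: mulrC.
Qed.

End GeneratorMonomials.

Lemma mxtrace_anticomm (F : numDomainType) n (x P : 'M[F]_n) :
  x *m x = 1%:M -> x *m P = - (P *m x) -> \tr P = 0.
Proof.
move=> xx xP; have trN : \tr P = - \tr P.
  rewrite -[in LHS](mul1mx P) -xx -mulmxA xP mulmxN linearN /= mxtrace_mulC.
  by rewrite -mulmxA xx mulmx1.
apply/eqP; have := mulrn_eq0 (\tr P) 2.
by rewrite mulr2n {1}trN addNr eqxx /= => <-.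
Qed.

Section GammaMatrices.
Variable C : numClosedFieldType.
Local Open Scope sesquilinear_scope.

Lemma trmxC_mul m n k (A : 'M[C]_(m, n)) (B : 'M_(n, k)) :
  (A *m B)^t* = B^t* *m A^t*.
Proof. by rewrite trmx_mul map_mxM. Qed.

Lemma trmxC_prod (I : Type) (r : seq I) (d : nat) (F : I -> 'M[C]_d.+1) :
  (\prod_(i <- r) F i)^t* = \prod_(i <- rev r) (F i)^t*.
Proof.
elim: r => [|i r IHr]; first by rewrite !big_nil trmx1 map_mx1.
by rewrite big_cons rev_cons big_rcons -IHr; apply: trmxC_mul.
Qed.

Section PauliBlocks.
Variable d : nat.
Implicit Types A B : 'M[C]_d.+1.

(* sigma_z (x) A, sigma_x (x) 1 and sigma_y (x) 1, in block form. *)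
Definition sigma_z_mx A : 'M[C]_(d.+1 + d.+1) := block_mx A 0 0 (- A).
Definition sigma_x_mx : 'M[C]_(d.+1 + d.+1) := block_mx 0 1%:M 1%:M 0.
Definition sigma_y_mx : 'M[C]_(d.+1 + d.+1) := block_mx 0 (- 'i%:M) 'i%:M 0.

Lemma mul_sigma_z_mx A B :
  sigma_z_mx A *m sigma_z_mx B = block_mx (A *m B) 0 0 (A *m B).
Proof.
by rewrite mulmx_block !mulmx0 !mul0mx !addr0 !add0r mulmxN mulNmx opprK.
Qed.

Lemma sigma_z_mx_sqr A : A *m A = 1%:M -> sigma_z_mx A *m sigma_z_mx A = 1%:M.
Proof. by move=> AA; rewrite mul_sigma_z_mx AA -scalar_mx_block. Qed.

Lemma sigma_z_mx_anticomm A B : A *m B = - (B *m A) ->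
  sigma_z_mx A *m sigma_z_mx B = - (sigma_z_mx B *m sigma_z_mx A).
Proof. by move=> AB; rewrite !mul_sigma_z_mx AB opp_block_mx !oppr0. Qed.

Lemma sigma_zx_anticomm A : sigma_z_mx A *m sigma_x_mx = - (sigma_x_mx *m sigma_z_mx A).
Proof.
rewrite !mulmx_block !mulmx0 !mul0mx !addr0 !add0r !mulmx1 !mul1mx.
by rewrite opp_block_mx !oppr0 opprK.
Qed.

Lemma sigma_zy_anticomm A : sigma_z_mx A *m sigma_y_mx = - (sigma_y_mx *m sigma_z_mx A).
Proof.
rewrite !mulmx_block !mulmx0 !mul0mx !addr0 !add0r opp_block_mx !oppr0.
by rewrite !mulmxN !mulNmx !opprK mul_mx_scalar mul_scalar_mx.
Qed.

Lemma sigma_xy_anticomm : sigma_x_mx *m sigma_y_mx = - (sigma_y_mx *m sigma_x_mx).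
Proof.
rewrite !mulmx_block !mulmx0 !mul0mx !addr0 !add0r !mulmx1 !mul1mx.
by rewrite opp_block_mx !oppr0 opprK.
Qed.

Lemma sigma_x_mx_sqr : sigma_x_mx *m sigma_x_mx = 1%:M.
Proof.
by rewrite mulmx_block !mulmx0 !mul0mx !addr0 !add0r !mulmx1 -scalar_mx_block.
Qed.

Lemma sigma_y_mx_sqr : sigma_y_mx *m sigma_y_mx = 1%:M.
Proof.
rewrite mulmx_block !mulmx0 !mul0mx !addr0 !add0r mulmxN mulNmx.
by rewrite -scalar_mxM -expr2 sqrCi raddfN opprK -scalar_mx_block.
Qed.

Lemma trmxC_sigma_z_mx A : (sigma_z_mx A)^t* = sigma_z_mx (A^t*).
Proof. by rewrite tr_block_mx map_block_mx !trmx0 !map_mx0 linearN map_mxN. Qed.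

Lemma trmxC_sigma_x_mx : sigma_x_mx^t* = sigma_x_mx.
Proof. by rewrite tr_block_mx map_block_mx !trmx0 !map_mx0 trmx1 map_mx1. Qed.

Lemma trmxC_sigma_y_mx : sigma_y_mx^t* = sigma_y_mx.
Proof.
rewrite tr_block_mx linearN /= !tr_scalar_mx !trmx0 map_block_mx !map_mx0.
by rewrite map_mxN !map_scalar_mx /= conjCi raddfN opprK.
Qed.

End PauliBlocks.

Fixpoint gamma_dim (m : nat) : nat :=
  if m is m'.+1 then gamma_dim m' + (gamma_dim m').+1 else 0.

Lemma gamma_dimE m : (gamma_dim m).+1 = (2 ^ m)%N.
Proof. by elim: m => //= m IHm; rewrite -addSn IHm expnS mul2n addnn. Qed.

Fixpoint gamma (m : nat) : nat -> 'M[C]_((gamma_dim m).+1) :=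
  match m return nat -> 'M[C]_((gamma_dim m).+1) with
  | 0 => fun=> 0
  | m'.+1 => fun k =>
    if (k < 2 * m')%N then sigma_z_mx (gamma m' k)
    else if k == (2 * m')%N then sigma_x_mx _ else sigma_y_mx _
  end.

Lemma gamma_sqr m k : (k < 2 * m)%N -> gamma m k *m gamma m k = 1%:M.
Proof.
elim: m k => [|m IHm] k //= lt_k_2m.
case: ifP => [lt_k | _]; first exact/sigma_z_mx_sqr/IHm.
by case: ifP => _; [apply: sigma_x_mx_sqr | apply: sigma_y_mx_sqr].
Qed.

Lemma gamma_anticomm m k l : (k < 2 * m)%N -> (l < 2 * m)%N -> k != l ->
  gamma m k *m gamma m l = - (gamma m l *m gamma m k).
Proof.
have anti_sym n (a b : 'M[C]_n) : a = - b -> b = - a by move->; rewrite opprK.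
elim: m k l => [|m IHm] k l //= lt_k lt_l ne_kl.
case: (ltnP k (2 * m)) => [k_lt | k_ge]; case: (ltnP l (2 * m)) => [l_lt | l_ge].
- exact/sigma_z_mx_anticomm/IHm.
- by case: eqP => _; [apply: sigma_zx_anticomm | apply: sigma_zy_anticomm].
- by apply: anti_sym; case: eqP => _; [apply: sigma_zx_anticomm | apply: sigma_zy_anticomm].
case: (eqVneq k (2 * m)) => [ek | nek]; case: (eqVneq l (2 * m)) => [el | nel].
- by rewrite ek el eqxx in ne_kl.
- exact: sigma_xy_anticomm.
- exact/anti_sym/sigma_xy_anticomm.
- by move: ne_kl; rewrite mulnS in lt_k lt_l; lia.
Qed.

Lemma trmxC_gamma m k : (gamma m k)^t* = gamma m k.
Proof.
elim: m k => [|m IHm] k /=; first by rewrite trmx0 map_mx0.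
case: ifP => _; first by rewrite trmxC_sigma_z_mx IHm.
by case: ifP => _; [apply: trmxC_sigma_x_mx | apply: trmxC_sigma_y_mx].
Qed.

Lemma tr_gamma_monomial m k (S : pred nat) : (k <= 2 * m)%N -> has S (iota 0 k) ->
  \tr (gen_monomial (gamma m) k S) = 0.
Proof.
move=> le_k_2m /(exists_odd_count_predD1 le_k_2m) [b lt_b_2m odd_cnt].
apply: (@mxtrace_anticomm _ _ (gamma m b)); first exact: gamma_sqr.
rewrite !mulmxE (@commr_gen_monomial _ _ _ _ (fun j => if j == b then 1 else -1)).
  rewrite (eq_bigr (fun j => if j != b then -1 else 1)) => [|j _]; last by case: eqP.
  rewrite -big_mkcondr big_const_seq iter_mulr_1 -signr_odd /index_iota subn0.
  by rewrite odd_cnt scaleN1r.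
move=> j lt_jk _; case: eqVneq => [->|ne_jb]; first by rewrite scale1r.
rewrite scaleN1r -!mulmxE gamma_anticomm // 1?eq_sym //.
exact: leq_trans lt_jk le_k_2m.
Qed.

End GammaMatrices.

Section CliffordMatrixRepresentation.
Variables (R : realType) (p q : nat).
Local Notation n := (p + q)%N.
Local Notation C := R[i].
Local Notation m := (uphalf n).
Local Notation N := (gamma_dim m).+1.
Local Open Scope sesquilinear_scope.
Implicit Types (A B : {set 'I_n}) (X Y : cl R p q).

Lemma cl_N_gamma_dim : cl_N p q = N.
Proof. by rewrite /cl_N gamma_dimE. Qed.

Let eta (i : nat) : C := if (i < p)%N then 1 else -1.
Let sqrt_eta (i : nat) : C := if (i < p)%N then 1 else 'i.

Definition gen_mx (i : nat) : 'M[C]_N := sqrt_eta i *: gamma C m i.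

Lemma gen_mx_sqr i : (i < n)%N -> gen_mx i * gen_mx i = (eta i)%:A.
Proof.
move=> lt_i_n; rewrite -scalerAl -scalerAr scalerA -mulmxE gamma_sqr; last first.
  exact: leq_trans lt_i_n (leq_double_uphalf n).
by rewrite /sqrt_eta /eta; case: ifP; rewrite ?mulr1 // -expr2 sqrCi.
Qed.

Lemma gen_mx_anticomm i j : (i < n)%N -> (j < n)%N -> i != j ->
  gen_mx i * gen_mx j = - (gen_mx j * gen_mx i).
Proof.
move=> lt_i_n lt_j_n ne_ij; rewrite -!scalerAl -!scalerAr !scalerA -!mulmxE.
by rewrite gamma_anticomm ?(leq_trans _ (leq_double_uphalf n)) // scalerN mulrC.
Qed.

Lemma trmxC_gen_mx i : (gen_mx i)^t* = eta i *: gen_mx i.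
Proof.
rewrite linearZ /= map_mxZ trmxC_gamma scalerA /eta /sqrt_eta.
by case: ifP => _; rewrite /= ?rmorph1 ?mulr1 // conjCi mulN1r.
Qed.

(* Subsets of 'I_n are read as predicates on nat, so that the monomials e_A
   can be built by induction on the number of generators. *)
Definition nat_set (A : {set 'I_n}) : pred nat :=
  fun i => if insub i is Some a then a \in A else false.

Lemma nat_set_val A (a : 'I_n) : nat_set A a = (a \in A).
Proof. by rewrite /nat_set valK. Qed.

Lemma nat_set_symdiff A B i : (i < n)%N ->
  nat_set (cl_symdiff A B) i = nat_set A i (+) nat_set B i.
Proof.
move=> lt_i_n; have -> : i = val (Ordinal lt_i_n) by [].
rewrite !nat_set_val !inE.
by case: (_ \in A); case: (_ \in B).
Qed.

Definition basis_mx (A : {set 'I_n}) : 'M[C]_N :=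
  gen_monomial gen_mx n (nat_set A).

Lemma card_cl_sign_pairs (A B : {set 'I_n}) :
  #|[set ab : 'I_n * 'I_n | (ab.1 \in A) && (ab.2 \in B) && (ab.2 < ab.1)%N]| =
  inversions n (nat_set A) (nat_set B).
Proof.
rewrite cardsE -sum1_card (eq_bigl (fun ab : 'I_n * 'I_n =>
  (ab.1 \in A) && ((ab.2 \in B) && (ab.2 < ab.1)%N))); last first.
  by move=> ab; rewrite unfold_in andbA.
rewrite -(pair_big_dep (mem A) (fun i j => (j \in B) && (j < i)%N) (fun _ _ => 1%N)) /=.
rewrite /inversions big_mkord; apply: eq_big => [i | i _]; first by rewrite nat_set_val.
have -> : iota 0 i = index_iota 0 i by rewrite /index_iota subn0.
rewrite -sum1_count (big_nat_widen _ _ _ _ _ (ltnW (ltn_ord i))) big_mkord.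
by apply: eq_bigl => j; rewrite nat_set_val.
Qed.

Lemma cl_signE (A B : {set 'I_n}) :
  cl_sign R A B = (-1) ^+ inversions n (nat_set A) (nat_set B) *
    \prod_(0 <= i < n | nat_set A i && nat_set B i) eta i.
Proof.
rewrite /cl_sign card_cl_sign_pairs big_mkord; congr (_ * _).
by apply: eq_big => [c | c _]; rewrite ?inE -?nat_set_val // /cl_eta.
Qed.

Lemma basis_mx_mul A B :
  basis_mx A * basis_mx B = cl_sign R A B *: basis_mx (cl_symdiff A B).
Proof.
rewrite /basis_mx (gen_monomial_mul gen_mx_sqr gen_mx_anticomm) // cl_signE.
by congr (_ *: _); apply: eq_gen_monomial => i /nat_set_symdiff ->.
Qed.

Lemma basis_mx_enum A : basis_mx A = \prod_(a <- enum A) gen_mx a.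
Proof.
have -> : enum A = filter (mem A) (enum 'I_n) by rewrite enumT.
rewrite /basis_mx /gen_monomial -big_filter -(big_map val xpredT) /index_iota subn0.
rewrite -val_enum_ord filter_map; congr (\prod_(i <- map val _) _).
by apply: eq_filter => a; rewrite /= nat_set_val.
Qed.

Definition cl_mx (X : cl R p q) : 'M[C]_N := \sum_A X A *: basis_mx A.

Fact cl_mx_is_semilinear : semilinear cl_mx.
Proof.
split=> [a X | X Y]; rewrite /cl_mx ?scaler_sumr -?big_split.
  by apply: eq_bigr => A _; rewrite ffunE scalerA.
by apply: eq_bigr => A _; rewrite ffunE scalerDl.
Qed.

HB.instance Definition _ :=
  GRing.isSemilinear.Build C (cl R p q) 'M[C]_N _ cl_mx cl_mx_is_semilinear.

Lemma cl_mx_basis A : cl_mx (cl_basis R A) = basis_mx A.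
Proof.
rewrite /cl_mx (bigD1 A) //= big1 ?addr0 => [|B]; first by rewrite ffunE eqxx scale1r.
by rewrite ffunE => /negbTE ->; rewrite scale0r.
Qed.

Lemma basis_mx0 : basis_mx set0 = 1.
Proof. by rewrite basis_mx_enum enum_set0 big_nil. Qed.

Lemma cl_mx_one : cl_mx (cl_one R p q) = 1.
Proof. by rewrite cl_mx_basis basis_mx0. Qed.

Lemma cl_mx_gen a : cl_mx (cl_gen R a) = gen_mx a.
Proof. by rewrite cl_mx_basis basis_mx_enum enum_set1 big_seq1. Qed.

Lemma cl_mx_mul X Y : cl_mx (cl_mul X Y) = cl_mx X * cl_mx Y.
Proof.
rewrite /cl_mx mulr_suml; under eq_bigr => D _ do rewrite ffunE scaler_suml.
rewrite exchange_big /=; apply: eq_bigr => A _.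
under eq_bigr => D _ do rewrite scaler_suml.
rewrite exchange_big /= mulr_sumr; apply: eq_bigr => B _.
rewrite (bigD1 (cl_symdiff A B)) //= eqxx big1 ?addr0 => [|D]; last first.
  by rewrite eq_sym => /negbTE ->; rewrite scale0r.
rewrite -[in RHS]scalerAr -[in RHS]scalerAl basis_mx_mul !scalerA.
by congr (_ *: _); rewrite [LHS]mulrC [cl_sign _ _ _ * _]mulrC mulrA.
Qed.

Lemma cl_mx_basis_inv A : cl_mx (cl_basis_inv R A) = (basis_mx A)^t*.
Proof.
rewrite basis_mx_enum trmxC_prod /cl_basis_inv.
elim: (rev (enum A)) => [|a r IHr] /=; first by rewrite big_nil cl_mx_one.
by rewrite cl_mx_mul IHr big_cons linearZ /= cl_mx_gen trmxC_gen_mx.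
Qed.

Lemma trmxC_cl_mx X : (cl_mx X)^t* = \sum_A (X A)^* *: (basis_mx A)^t*.
Proof.
rewrite /cl_mx linear_sum raddf_sum; apply: eq_bigr => A _.
by rewrite linearZ /= map_mxZ.
Qed.

Lemma cl_mx_dagger X : cl_mx (cl_dagger X) = (cl_mx X)^t*.
Proof.
rewrite /cl_dagger linear_sum trmxC_cl_mx; apply: eq_bigr => A _.
by rewrite linearZ /= cl_mx_basis_inv.
Qed.

Lemma mxtrace_basis_mx A : \tr (basis_mx A) = N%:R * (A == set0)%:R.
Proof.
have [->|/set0Pn[a aA]] := eqVneq A set0; first by rewrite basis_mx0 mxtrace1 mulr1.
rewrite mulr0 /basis_mx /gen_mx /gen_monomial scaler_prod mxtraceZ.
rewrite tr_gamma_monomial ?mulr0 ?(leq_double_uphalf n) //.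
by apply/hasP; exists (val a); rewrite ?mem_iota ?nat_set_val /=.
Qed.

Lemma mxtrace_cl_mx X : \tr (cl_mx X) = N%:R * cl_scalar X.
Proof.
rewrite /cl_mx raddf_sum (bigD1 set0) //= big1 ?addr0 => [|A nA].
  by rewrite mxtraceZ mxtrace_basis_mx eqxx mulr1 mulrC.
by rewrite mxtraceZ mxtrace_basis_mx (negbTE nA) !mulr0.
Qed.

Lemma cl_mx_Mk X k : cl_mx (cl_Mk X k) = faddeev_leverrier (cl_mx X) k.
Proof.
elim: k => //= k IHk; rewrite cl_mx_mul linearB linearZ /= cl_mx_one IHk.
by rewrite -IHk mxtrace_cl_mx cl_N_gamma_dim mulrAC.
Qed.

Lemma cl_C_N_det X : cl_C X (cl_N p q) = - ((-1) ^+ N * \det (cl_mx X)).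
Proof.
have := faddeev_leverrier_det (cl_mx X) (pchar_num _) (ltn0Sn _).
rewrite -cl_mx_Mk mxtrace_cl_mx mulrAC divff ?pnatr_eq0 // mul1r => <-.
by rewrite /cl_C cl_N_gamma_dim divff ?pnatr_eq0 // mul1r.
Qed.

Lemma basis_mx_unitary A : (basis_mx A)^t* * basis_mx A = 1.
Proof.
rewrite basis_mx_enum; elim: (enum A) => [|a s IHs].
  by rewrite big_nil trmx1 map_mx1 mulr1.
have gen_unitary : (gen_mx a)^t* * gen_mx a = 1.
  rewrite trmxC_gen_mx -scalerAl gen_mx_sqr // scalerA /eta.
  by case: ifP; rewrite ?mulr1 ?mulrNN ?mulr1 scale1r.
rewrite big_cons -mulmxE trmxC_mul !mulmxE -mulrA (mulrA _ (gen_mx a)).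
by rewrite gen_unitary mul1r.
Qed.

Lemma cl_sign_neq0 A B : cl_sign R A B != 0.
Proof.
rewrite mulf_neq0 ?signr_eq0 //; apply/prodf_neq0 => c _.
by rewrite /cl_eta; case: ifP; rewrite ?oppr_eq0 oner_eq0.
Qed.

Lemma cl_symdiff_eq0 A B : (cl_symdiff A B == set0) = (A == B).
Proof.
apply/eqP/eqP => [AB0 | ->]; last by apply/setP => x; rewrite !inE; case: (x \in B).
apply/setP => x; have /setP/(_ x) := AB0.
by rewrite !inE; case: (x \in A); case: (x \in B).
Qed.

Lemma mxtrace_basis_mx_adj A B :
  \tr ((basis_mx A)^t* * basis_mx B) = N%:R * (A == B)%:R.
Proof.
have [<-|neAB] := eqVneq A B; first by rewrite basis_mx_unitary mxtrace1 mulr1.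
have basis_adj : cl_sign R A A *: (basis_mx A)^t* = basis_mx A.
  have sqr_basis : basis_mx A * basis_mx A = cl_sign R A A *: 1.
    rewrite basis_mx_mul (eqP (_ : cl_symdiff A A == set0)) ?cl_symdiff_eq0 //.
    by rewrite basis_mx0.
  by rewrite -[_^t*]mulr1 scalerAr -sqr_basis mulrA basis_mx_unitary mul1r.
have : cl_sign R A A * \tr ((basis_mx A)^t* * basis_mx B) = 0.
  rewrite -mxtraceZ scalerAl basis_adj basis_mx_mul mxtraceZ mxtrace_basis_mx.
  by rewrite cl_symdiff_eq0 (negbTE neAB) !mulr0.
by move/eqP; rewrite mulf_eq0 (negbTE (cl_sign_neq0 A A)) mulr0 => /eqP.
Qed.

Lemma cl_C_N_dagger_mul X :
  cl_C (cl_mul (cl_dagger X) X) (cl_N p q) = - (-1) ^+ N * `|cl_C X (cl_N p q)| ^+ 2.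
Proof.
rewrite !cl_C_N_det cl_mx_mul cl_mx_dagger -mulmxE det_mulmx det_map_mx det_tr.
by rewrite normrN normrM normr_sign mul1r normCKC mulNr mulrA.
Qed.

Lemma cl_C1_dagger_mul X :
  cl_C (cl_mul (cl_dagger X) X) 1 = N%:R * \sum_A `|X A| ^+ 2.
Proof.
rewrite /cl_C /= cl_N_gamma_dim divr1 -mxtrace_cl_mx cl_mx_mul cl_mx_dagger.
rewrite trmxC_cl_mx mulr_suml raddf_sum mulr_sumr; apply: eq_bigr => A _.
rewrite /cl_mx mulr_sumr raddf_sum (bigD1 A) //= big1 ?addr0 => [|B neBA].
  rewrite -scalerAl -scalerAr !mxtraceZ mxtrace_basis_mx_adj eqxx mulr1.
  by rewrite normCKC mulrA mulrC.
rewrite -scalerAl -scalerAr !mxtraceZ mxtrace_basis_mx_adj.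
by rewrite eq_sym (negbTE neBA) !mulr0.
Qed.

End CliffordMatrixRepresentation.

Theorem lemma3 (R : realType) (p q : nat) (M : cl R p q) :
  (0 < p + q)%N ->
  (cl_C (cl_mul (cl_dagger M) M) (cl_N p q) = 0 <-> cl_C M (cl_N p q) = 0) /\
  (cl_C (cl_mul (cl_dagger M) M) 1 = 0 <-> M = 0).
Proof.
move=> _; rewrite cl_C_N_dagger_mul cl_C1_dagger_mul; split; split=> [/eqP | ->].
- by rewrite mulf_eq0 oppr_eq0 signr_eq0 sqrf_eq0 normr_eq0 => /eqP.
- by rewrite normr0 expr0n mulr0.
- rewrite mulf_eq0 pnatr_eq0 /= => /eqP sum_eq0; apply/ffunP => A; rewrite ffunE.
  have /(_ A isT)/eqP := psumr_eq0P (fun B _ => exprn_ge0 2 (normr_ge0 (M B))) sum_eq0.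
  by rewrite sqrf_eq0 normr_eq0 => /eqP.
- by rewrite big1 ?mulr0 // => A _; rewrite ffunE normr0 expr0n.
Qed.
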